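(* Assume the setting in the context (in particular Assumption (A)). Let $\rho>0$, $z_0\in V_f(\rho)$ and $\epsilon>0$, run Algorithm $\mathcal{A}_*$ from $z_0$ with accuracy $\epsilon$, and let $$D:=\left\lceil5+\frac{1}{\ln15}\ln\left(1+\frac{f(z_0)-f^*}{\epsilon}\right)\right\rceil.$$ If $j_{out}\geq D$, then $m_{\ell+1}\leq\frac{1}{\sqrt{15}}m_{\ell+1+D}$ for all $\ell\in\{0,1,\dots,j_{out}-D\}$.
   Context: Let $f:\mathbb{R}^n\to(-\infty,\infty]$ be a proper closed convex function such that the problem $f^*=\min_{x\in\mathbb{R}^n}f(x)$ is solvable. Let $\Omega_f=\{x: f(x)=f^*\}$, fix a norm $\|\cdot\|$ on $\mathbb{R}^n$ with dual norm $\|y\|_*=\sup\{y^Tz:\|z\|\leq 1\}$, and for $x\in\mathbb{R}^n$ let $\bar x=\arg\min_{z\in\Omega_f}\|x-z\|$. For $\rho\geq0$ let $V_f(\rho)=\{x: f(x)-f^*\leq\rho\}$. Let $\mathcal{A}$ be an iterative algorithm: for $x_0\in\mathrm{dom} f$ and integer $k\geq1$, $\mathcal{A}(x_0,k)$ denotes its $k$-th iterate started from $x_0$ (and $\mathcal{A}(x_0,0)=x_0$). Assumption (A): (i) for every $\rho>0$ there is $\mu_\rho>0$ with $f(x_0)-f^*\geq\frac{\mu_\rho}{2}\|x_0-\bar x_0\|^2$ for all $x_0\in V_f(\rho)$; (ii) there exist $a_f>0$, $L_f>0$ and $g:\mathbb{R}^n\to\mathbb{R}^n$ with $g(x)=0\iff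 x\in\Omega_f$ such that for every $x_0\in\mathrm{dom} f$: $f(\mathcal{A}(x_0,1))\leq f(x_0)-\frac{1}{2L_f}\|g(x_0)\|_*^2$ and $f(\mathcal{A}(x_0,k))-f^*\leq\frac{a_f}{(k+1)^2}\|x_0-\bar x_0\|^2$ for all $k\geq1$; (iii) $\bar n_\rho:=\max\{\frac12,\sqrt{2a_f/\mu_\rho}\}$. Procedure $\mathcal{A}_d(r,n)$ (input $r\in\mathrm{dom} f$, $n\in\mathbb{R}$): set $x_0=r$, $k=0$. Repeat: $k\gets k+1$; set $x_k=\mathcal{A}(x_0,k)$ if $f(\mathcal{A}(x_0,k))\leq f(x_{k-1})$, and $x_k=x_{k-1}$ otherwise; $\ell=\lfloor k/2\rfloor$; until $k\geq n$ and $f(x_\ell)-f(x_k)\leq\frac13(f(x_0)-f(x_\ell))$. Output $z=x_k$, $m=k$. Algorithm $\mathcal{A}_*(z_0)$ (input $z_0\in\mathrm{dom} f$, $\epsilon>0$): set $m_0=1$, $m_{-1}=1$, $j=-1$. Repeat: $j\gets j+1$; $s_j=\sqrt{\frac{f(z_{j-1})-f(z_j)}{f(z_{j-2})-f(z_j)}}$ if $j\geq2$ and $s_j=0$ otherwise; $n_j=\max\{m_j,4s_jm_{j-1}\}$; $[z_{j+1},m_{j+1}]=\mathcal{A}_d(z_j,n_j)$; until $f(z_j)-f(z_{j+1})\leq\epsilon$. Output $z_{out}=z_{j+1}$, $j_{out}=j$. *)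

From HB Require Import structures.
From mathcomp Require Import all_boot all_order all_algebra.
From mathcomp Require Import all_classical all_reals all_analysis.
Import numFieldTopology.Exports numFieldNormedType.Exports.
Set Implicit Arguments. Unset Strict Implicit. Unset Printing Implicit Defensive.
Import Order.TTheory GRing.Theory Num.Theory.
Local Open Scope classical_set_scope.
Local Open Scope ring_scope.

Section Defs.
Variables (R : realType) (n : nat).
Local Notation vec := 'rV[R]_n.

Definition is_norm (N : vec -> R) : Prop :=
  (forall x, 0 <= N x) /\ (forall x, N x = 0 -> x = 0) /\
  (forall (a : R) x, N (a *: x) = `|a| * N x) /\
  (forall x y, N (x + y) <= N x + N y).

Definition dotv (y z : vec) : R := \sum_(i < n) y 0 i * z 0 i.

Definition dual_norm (N : vec -> R) (y : vec) : R :=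
  sup [set dotv y z | z in [set z | N z <= 1]].

Definition proper_fun (f : vec -> \bar R) : Prop :=
  (forall x, f x != -oo%E) /\ (exists x, f x < +oo)%E.

(* closed = lower semicontinuous = all sublevel sets closed *)
Definition closed_fun (f : vec -> \bar R) : Prop :=
  forall a : R, closed [set x | (f x <= a%:E)%E].

Definition convex_fun (f : vec -> \bar R) : Prop :=
  forall (x y : vec) (t : R), 0 < t < 1 ->
    (f (t *: x + (1 - t) *: y)%R <= t%:E * f x + (1 - t)%:E * f y)%E.

Definition domf (f : vec -> \bar R) : set vec := [set x | (f x < +oo)%E].

Definition Omega (f : vec -> \bar R) (fstar : R) : set vec :=
  [set x | f x = fstar%:E].

Definition nearest (N : vec -> R) (Om : set vec) (x xb : vec) : Prop :=
  Om xb /\ forall z, Om z -> N (x - xb) <= N (x - z).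

Definition Vf (f : vec -> \bar R) (fstar rho : R) : set vec :=
  [set x | (f x <= (fstar + rho)%:E)%E].

(* Assumption (A) (i) and (ii); item (iii) is merely a definition. *)
Definition assumptionA (N : vec -> R) (f : vec -> \bar R) (fstar : R)
    (A : vec -> nat -> vec) : Prop :=
  (forall rho : R, 0 < rho -> exists mu : R, 0 < mu /\
     forall x0 xb, Vf f fstar rho x0 -> nearest N (Omega f fstar) x0 xb ->
       (f x0 - fstar%:E >= (mu / 2 * N (x0 - xb) ^+ 2)%:E)%E) /\
  (exists (af Lf : R) (g : vec -> vec), 0 < af /\ 0 < Lf /\
     (forall x, g x = 0 <-> Omega f fstar x) /\
     forall x0, domf f x0 ->
       (f (A x0 1%N) <= f x0 - (1 / (2 * Lf) * dual_norm N (g x0) ^+ 2)%:E)%E /\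
       forall (k : nat) xb, (1 <= k)%N -> nearest N (Omega f fstar) x0 xb ->
         (f (A x0 k) - fstar%:E <= (af / (k.+1%:R) ^+ 2 * N (x0 - xb) ^+ 2)%:E)%E).

(* real value of f on its domain (all iterates lie in dom f) *)
Definition Fr (f : vec -> \bar R) (x : vec) : R := fine (f x).

Fixpoint Ad_seq (f : vec -> \bar R) (A : vec -> nat -> vec) (r : vec) (k : nat) : vec :=
  match k with
  | 0%N => r
  | k'.+1 => if (f (A r k'.+1) <= f (Ad_seq f A r k'))%E then A r k'.+1
             else Ad_seq f A r k'
  end.

Definition Ad_stop f A (r : vec) (nr : R) (k : nat) : Prop :=
  let x := Ad_seq f A r in
  let l := (k./2)%N in
  nr <= k%:R /\ Fr f (x l) - Fr f (x k) <= (Fr f (x 0%N) - Fr f (x l)) / 3.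

Definition Ad_out f A (r : vec) (nr : R) (z : vec) (m : nat) : Prop :=
  (1 <= m)%N /\ Ad_stop f A r nr m /\
  (forall k, (1 <= k < m)%N -> ~ Ad_stop f A r nr k) /\
  z = Ad_seq f A r m.

(* n_j of algorithm A_* given the sequences z_j and m_j (j >= 0; m_{-1} only
   appears multiplied by s_0 = 0) *)
Definition Astar_n f (z : nat -> vec) (m : nat -> nat) (j : nat) : R :=
  match j with
  | 0%N | 1%N => (m j)%:R
  | j'.+2 =>
    let s := Num.sqrt ((Fr f (z j'.+1) - Fr f (z j)) / (Fr f (z j') - Fr f (z j))) in
    Num.max (m j)%:R (4 * s * (m j'.+1)%:R)
  end.

Definition Astar_run f A (z0 : vec) (eps : R) (z : nat -> vec) (m : nat -> nat)
    (jout : nat) : Prop :=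
  z 0%N = z0 /\ m 0%N = 1%N /\
  (forall j, (j <= jout)%N -> Ad_out f A (z j) (Astar_n f z m j) (z j.+1) (m j.+1)) /\
  (forall j, (j < jout)%N -> eps < Fr f (z j) - Fr f (z j.+1)) /\
  Fr f (z jout) - Fr f (z jout.+1) <= eps.

End Defs.

(** If [m] grew by less than a factor [sqrt 15] over [D] consecutive calls of
    [A_d], write [a_i = f(z_(l+i)) - f(z_(l+i+1))] and [M_i = m_(l+1+i)]. Each
    [a_i] exceeds [eps], [a_0 <= f(z_0) - fstar], [M] is nondecreasing and the
    choice of [n_j] gives [M_(k+2) >= 4 sqrt(a_(k+1) / (a_k + a_(k+1))) M_k].
    As all ratios [M_(k+2)^2 / M_k^2] then lie in [[1, 15)], this forces the
    potential [a_k / (M_k M_(k+1))^4] to shrink by a factor [15] at each step,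
    whence [15^(D-1) eps < 15^4 (f(z_0) - fstar)], contradicting the choice of [D]. *)

From HB Require Import structures.
From mathcomp Require Import all_boot all_order all_algebra.
From mathcomp Require Import all_classical all_reals all_analysis.
From mathcomp Require Import ring lra zify.
Import Order.TTheory GRing.Theory Num.Theory.
Local Open Scope classical_set_scope.
Local Open Scope ring_scope.
Set Implicit Arguments. Unset Strict Implicit. Unset Printing Implicit Defensive.

Section Estimates.
Variable R : realType.

Lemma homo_le_upto (M : nat -> R) (t : nat) :
  (forall i, (i < t)%N -> M i <= M i.+1) ->
  forall i j, (i <= j <= t)%N -> M i <= M j.
Proof.
move=> M_le i j /andP[ij jt].
apply: (homo_leq_in (D := [pred i | (i <= t)%N]) (r := <=%R) lexx (@le_trans _ _)) => //=.
- by move=> x y; rewrite !inE => _ yt k; rewrite inE; lia.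
- by move=> x _; rewrite inE; apply: M_le.
- by rewrite inE; lia.
Qed.

Lemma geometric_decay (q : R) (u : nat -> R) (t : nat) : 0 <= q ->
  (forall k, (k < t)%N -> q * u k.+1 <= u k) -> q ^+ t * u t <= u 0%N.
Proof.
move=> q0; elim: t => [|t IH] step; first by rewrite mul1r.
apply: le_trans (IH (fun k kt => step k (ltnW kt))).
by rewrite exprSr -mulrA ler_wpM2l ?exprn_ge0 ?step.
Qed.

Lemma ler_expr_ln (q x : R) (k : nat) :
  1 < q -> 0 < x -> ln x / ln q <= k%:R -> x <= q ^+ k.
Proof.
move=> q1 x0 le_k; have q0 : 0 < q by lra.
rewrite -ler_ln ?posrE ?exprn_gt0 // lnXn // -mulr_natl -ler_pdivrMr //.
by rewrite ln_gt0.
Qed.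

Lemma ratio_contraction (b c u v : R) :
  0 < b -> 0 < c -> 0 < u -> u <= v -> v < 15 * u ->
  16 * c * u <= (b + c) * v -> 15 * c * u ^+ 2 <= b * v ^+ 2.
Proof.
move=> b0 c0 u0 uv v15 link.
have [small_c|large_c] := lerP (15 * c) b.
  have : u ^+ 2 <= v ^+ 2 by rewrite ler_sqr ?nnegrE; lra.
  nra.
have c_lt : c < 15 * b.
  have : (b + c) * v < (b + c) * (15 * u) by rewrite ltr_pM2l ?addr_gt0.
  by rewrite -(ltr_pM2r u0); nra.
(* [256 b c - 15 (b + c)^2 = (15 c - b) (15 b - c)] *)
have disc : 15 * (b + c) ^+ 2 <= 256 * b * c by nra.
have sq : (16 * c * u) ^+ 2 <= ((b + c) * v) ^+ 2.
  by rewrite ler_sqr ?nnegrE //; nra.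
have bc2 : 0 < (b + c) ^+ 2 by rewrite exprn_gt0 ?addr_gt0.
rewrite -(ler_pM2r bc2); nra.
Qed.

Lemma potential_contraction (b c x y w : R) :
  0 < b -> 0 < c -> 0 < x -> 0 < y -> x <= w -> w < Num.sqrt 15 * x ->
  4 * Num.sqrt (c / (b + c)) * x <= w ->
  15 * (c / (y * w) ^+ 4) <= b / (x * y) ^+ 4.
Proof.
move=> b0 c0 x0 y0 xw w15 link.
have w0 : 0 < w by apply: lt_le_trans xw.
have [x_ge0 w_ge0] := (ltW x0, ltW w0).
have bc0 : 0 < b + c by rewrite addr_gt0.
have ratio_ge0 : 0 <= c / (b + c) by rewrite divr_ge0 ?ltW.
have contraction : 15 * c * (x ^+ 2) ^+ 2 <= b * (w ^+ 2) ^+ 2.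
  apply: ratio_contraction; rewrite ?exprn_gt0 //.
  - by rewrite ler_sqr ?nnegrE.
  - have : w ^+ 2 < (Num.sqrt 15 * x) ^+ 2.
      by rewrite ltr_sqr ?nnegrE ?mulr_ge0 ?sqrtr_ge0.
    by rewrite exprMn sqr_sqrtr.
  - have : (4 * Num.sqrt (c / (b + c)) * x) ^+ 2 <= w ^+ 2.
      by rewrite ler_sqr ?nnegrE ?mulr_ge0 ?sqrtr_ge0.
    rewrite !exprMn sqr_sqrtr // => sq_link.
    have -> : 16 * c * x ^+ 2 = (b + c) * (4 ^+ 2 * (c / (b + c)) * x ^+ 2).
      by field; rewrite gt_eqF.
    by rewrite ler_pM2l.
have [xy yw] : 0 < (x * y) ^+ 4 /\ 0 < (y * w) ^+ 4 by rewrite !exprn_gt0 ?mulr_gt0.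
rewrite mulrA ler_pdivrMr // mulrAC ler_pdivlMr //.
have -> : 15 * c * (x * y) ^+ 4 = y ^+ 4 * (15 * c * (x ^+ 2) ^+ 2) by ring.
have -> : b * (y * w) ^+ 4 = y ^+ 4 * (b * (w ^+ 2) ^+ 2) by ring.
by rewrite ler_pM2l ?exprn_gt0.
Qed.

Lemma slow_growth_decrease (a M : nat -> R) (t : nat) :
  (forall i, (i <= t)%N -> 0 < a i) -> 0 < M 0%N ->
  (forall i, (i <= t)%N -> M i <= M i.+1) ->
  (forall k, (k < t)%N -> 4 * Num.sqrt (a k.+1 / (a k + a k.+1)) * M k <= M k.+2) ->
  M t.+1 < Num.sqrt 15 * M 0%N ->
  15 ^+ t * a t < 15 ^+ 4 * a 0%N.
Proof.
move=> a_gt0 M0 M_le link growth.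
have M_mono := @homo_le_upto M t.+1 M_le.
have M_gt0 i : (i <= t.+1)%N -> 0 < M i.
  by move=> it; apply: lt_le_trans M0 (M_mono _ _ _); rewrite leq0n.
pose W k := (M k * M k.+1) ^+ 4.
have W_gt0 k : (k <= t)%N -> 0 < W k.
  by move=> kt; rewrite exprn_gt0 // mulr_gt0 // M_gt0 //; lia.
have decay : 15 ^+ t * (a t / W t) <= a 0%N / W 0%N.
  apply: (@geometric_decay 15 (fun k => a k / W k)) => // k kt.
  apply: potential_contraction; rewrite ?a_gt0 ?M_gt0 ?M_mono ?link //; try lia.
  apply: le_lt_trans (M_mono _ t.+1 _) (lt_le_trans growth _); first lia.
  by rewrite ler_pM2l ?sqrtr_gt0 // M_mono //; lia.
have W_growth : W t < 15 ^+ 4 * W 0%N.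
  have growth2 : M t.+1 ^+ 2 < 15 * M 0%N ^+ 2.
    have : M t.+1 ^+ 2 < (Num.sqrt 15 * M 0%N) ^+ 2.
      by rewrite ltr_sqr ?nnegrE ?mulr_ge0 ?sqrtr_ge0 ?ltW ?M_gt0.
    by rewrite exprMn sqr_sqrtr.
  have MM : M t * M t.+1 < 15 * (M 0%N * M 1%N).
    apply: (le_lt_trans (y := M t.+1 ^+ 2)).
      by rewrite expr2 ler_pM2r ?M_gt0 ?M_mono //; lia.
    apply: lt_le_trans growth2 _.
    by rewrite ler_pM2l // expr2 ler_pM2l ?M_gt0 ?M_mono.
  have MM_ge0 : 0 <= M t * M t.+1 by rewrite mulr_ge0 // ltW ?M_gt0.
  by rewrite /W -exprMn (ltrXn2r 4 MM_ge0 MM).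
have [W0 a0 Wt] : [/\ 0 < W 0%N, 0 < a 0%N & 0 < W t].
  by split; [exact: W_gt0 | exact: a_gt0 | exact: W_gt0].
move: decay; rewrite mulrA ler_pdivrMr // => decay; apply: le_lt_trans decay _.
by rewrite mulrAC ltr_pdivrMr // [15 ^+ 4 * _]mulrC -mulrA ltr_pM2l.
Qed.

End Estimates.

Lemma fine_le_between {R : realType} {a : R} {x y : \bar R} :
  (a%:E <= x)%E -> (x <= y)%E -> (y < +oo)%E -> a <= fine x <= fine y.
Proof. by case: x => [x||] //; case: y => [y||] //=; rewrite !lee_fin => -> ->. Qed.

Section Algorithm.
Variables (R : realType) (n : nat) (f : 'rV[R]_n -> \bar R) (A : 'rV[R]_n -> nat -> 'rV[R]_n).

Lemma Ad_seq_le r k : (f (Ad_seq f A r k) <= f r)%E.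
Proof. by elim: k => [|k IH] //=; case: ifP => // /le_trans; apply. Qed.

Lemma Ad_out_le r nr y k : Ad_out f A r nr y k -> (f y <= f r)%E.
Proof. by move=> [_ [_ [_ ->]]]; exact: Ad_seq_le. Qed.

Lemma Ad_out_ge r nr y k : Ad_out f A r nr y k -> nr <= k%:R.
Proof. by move=> [_ [[]]]. Qed.

Lemma Astar_n_ge z m j : (m j)%:R <= Astar_n f z m j.
Proof. by case: j => [|[|j]] //=; rewrite le_max lexx. Qed.

Lemma Astar_n_ge_link z m j :
  4 * Num.sqrt ((Fr f (z j.+1) - Fr f (z j.+2)) / (Fr f (z j) - Fr f (z j.+2)))
    * (m j.+1)%:R <= Astar_n f z m j.+2.
Proof. by rewrite /= le_max lexx orbT. Qed.

Variables (z0 : 'rV[R]_n) (eps : R) (z : nat -> 'rV[R]_n) (m : nat -> nat) (jout : nat).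
Hypothesis run : Astar_run f A z0 eps z m jout.

Lemma Astar_run_m_gt0 j : (j <= jout)%N -> (0 < m j.+1)%N.
Proof. by case: run => _ [_ [out _]] /out []. Qed.

Lemma Astar_run_m_le j : (j <= jout)%N -> (m j <= m j.+1)%N.
Proof.
case: run => _ [_ [out _]] /out /Ad_out_ge mj1.
by rewrite -(ler_nat R); apply: le_trans mj1; exact: Astar_n_ge.
Qed.

Lemma Astar_run_link j : (j.+2 <= jout)%N ->
  4 * Num.sqrt ((Fr f (z j.+1) - Fr f (z j.+2)) / (Fr f (z j) - Fr f (z j.+2)))
    * (m j.+1)%:R <= (m j.+3)%:R.
Proof.
case: run => _ [_ [out _]] /out /Ad_out_ge mj3.
by apply: le_trans mj3; exact: Astar_n_ge_link.
Qed.

Lemma Astar_run_le j : (j <= jout.+1)%N -> (f (z j) <= f z0)%E.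
Proof.
case: run => z00 [_ [out _]]; elim: j => [|j IH] jj; first by rewrite z00.
by apply: le_trans (IH (ltnW jj)); apply: Ad_out_le (out _ jj).
Qed.

Variable fstar : R.
Hypotheses (f_ge : forall x, (fstar%:E <= f x)%E) (fz0_fin : (f z0 < +oo)%E).
Hypothesis eps_gt0 : 0 < eps.

Lemma Astar_run_drop_le j : (j <= jout)%N ->
  Fr f (z j) - Fr f (z j.+1) <= Fr f z0 - fstar.
Proof.
move=> jj; have /andP[_ zj] := fine_le_between (f_ge _) (Astar_run_le (leqW jj)) fz0_fin.
have /andP[zj1 _] := fine_le_between (f_ge _) (Astar_run_le (j:=j.+1) jj) fz0_fin.
exact: lerB.
Qed.

Lemma Astar_run_slow_growth l K : (0 < K)%N -> (l + K <= jout)%N ->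
  (m (l.+1 + K))%:R < Num.sqrt 15 * (m l.+1)%:R :> R ->
  15 ^+ K.-1 * eps < 15 ^+ 4 * (Fr f z0 - fstar).
Proof.
case: run => _ [_ [_ [drop_gt _]]] K0 lK growth.
pose a i := Fr f (z (l + i)) - Fr f (z (l + i).+1).
have a_gt_eps i : (i < K)%N -> eps < a i by move=> iK; apply: drop_gt; lia.
have decrease : 15 ^+ K.-1 * a K.-1 < 15 ^+ 4 * a 0%N.
  apply: (@slow_growth_decrease _ a (fun i => (m (l.+1 + i))%:R)); rewrite ?prednK //.
  - by move=> i iK; apply: lt_trans eps_gt0 (a_gt_eps _ _); lia.
  - by rewrite ltr0n addn0 Astar_run_m_gt0 //; lia.
  - by move=> i iK; rewrite ler_nat addnS Astar_run_m_le //; lia.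
  - by move=> k kK; rewrite /a !addnS addSn addrA subrK Astar_run_link //; lia.
  - by rewrite addn0.
have a0_le : a 0%N <= Fr f z0 - fstar by apply: Astar_run_drop_le; lia.
apply: lt_le_trans (le_lt_trans _ decrease) _.
- by rewrite ler_pM2l ?exprn_gt0 // ltW // a_gt_eps // prednK.
- by rewrite ler_pM2l ?exprn_gt0.
Qed.
End Algorithm.

Theorem lemma1 (R : realType) (n : nat) (N : 'rV[R]_n -> R)
  (f : 'rV[R]_n -> \bar R) (fstar : R) (A : 'rV[R]_n -> nat -> 'rV[R]_n)
  (rho : R) (z0 : 'rV[R]_n) (eps : R)
  (z : nat -> 'rV[R]_n) (m : nat -> nat) (jout : nat) :
  is_norm N ->
  proper_fun f -> closed_fun f -> convex_fun f ->
  (exists x, f x = fstar%:E) -> (forall x, (fstar%:E <= f x)%E) ->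
  (forall x, A x 0%N = x) ->
  assumptionA N f fstar A ->
  0 < rho -> Vf f fstar rho z0 -> 0 < eps ->
  Astar_run f A z0 eps z m jout ->
  let D : int := Num.ceil (5 + ln (1 + (Fr f z0 - fstar) / eps) / ln 15) in
  D <= jout%:Z ->
  forall l : nat, l%:Z <= jout%:Z - D ->
    ((m l.+1)%:R : R) <= 1 / Num.sqrt (15 : R) * (m (l.+1 + `|D|%N)%N)%:R.
Proof.
move=> _ _ _ _ _ f_ge _ _ _ z0_sub eps_gt0 run D _ l lD.
have fz0_fin : (f z0 < +oo)%E by apply: le_lt_trans z0_sub (ltry _).
set F := (Fr f z0 - fstar) / eps.
have F_ge0 : 0 <= F.
  have /andP[fz0 _] := fine_le_between (f_ge z0) (lexx _) fz0_fin.
  by rewrite /F divr_ge0 ?subr_ge0 // ltW.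
have D_ge : 5 + ln (1 + F) / ln 15 <= D%:~R by exact: ceil_ge.
have ln_ratio_ge0 : 0 <= ln (1 + F) / ln 15 by rewrite divr_ge0 ?ln_ge0 ?ln_gt0 //; lra.
have [K DK] : exists K : nat, D = K%:Z.
  by exists `|D|%N; rewrite gez0_abs // -(ler_int R); lra.
rewrite DK in D_ge lD *; rewrite absz_nat.
have K5 : (5 <= K)%N by rewrite -(ler_nat R); lra.
have pow : 1 + F <= 15 ^+ (K - 5).
  by apply: ler_expr_ln; rewrite ?natrB //; lra.
rewrite leNgt mul1r ltr_pdivrMl ?sqrtr_gt0 //; apply/negP => growth.
have lK : (l + K <= jout)%N by lia.
have := Astar_run_slow_growth run f_ge fz0_fin eps_gt0 (leq_trans (ltn0Sn 4) K5) lK growth.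
have -> : K.-1 = (4 + (K - 5))%N by lia.
rewrite exprD -mulrA ltr_pM2l ?exprn_gt0 //.
rewrite -[Fr f z0 - fstar](divfK (lt0r_neq0 eps_gt0)) -/F ltr_pM2r //.
lra.
Qed.
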